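(* Define $\theta:\mathbb R\to\mathbb R$ by $\theta(x)=e^{-1/|x|}$ for $x\neq 0$ and $\theta(0)=0$. Let $q(x)=x+x^2$ and $p(x)=q(x)+\theta(x)=x+x^2+\theta(x)$. These are $C^\infty$ functions with $p(0)=q(0)=0$ and $p'(0)=q'(0)=1$, hence invertible near $0$; let $f=p^{-1}$ and $g=q^{-1}$ be their local inverses near $0$ (so $f,g$ are $C^\infty$, $f(0)=g(0)=0$, $f'(0)=g'(0)=1$, and their graphs do not coincide). Then $$\lim_{x\to 0^+}\frac{x - f^{-1}(g(x))}{g^{-1}(x)-f^{-1}(x)} = \lim_{x\to 0^+}\frac{x-p(g(x))}{q(x)-p(x)} = e^{-1}\neq 1.$$
   Context: Geometrically, with points $B=(x,g(x))$, $C=(f^{-1}(g(x)),g(x))$, $D=(g^{-1}(x),x)$, $E=(f^{-1}(x),x)$, the quotient above is the ratio of the (signed) lengths $|BC|/|ED|$; the result shows this ratio need not tend to $1$ when $f,g$ are merely $C^\infty$ rather than analytic. *)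

From Stdlib Require Import Reals.
From Coquelicot Require Import Coquelicot.
Open Scope R_scope.

Definition theta (x : R) : R :=
  if Req_EM_T x 0 then 0 else exp (- / Rabs x).

Definition q (x : R) : R := x + x ^ 2.
Definition p (x : R) : R := q x + theta x.

Definition local_inverse_at0 (q g : R -> R) : Prop :=
  exists delta : R, 0 < delta /\
    (forall x, Rabs x < delta -> g (q x) = x) /\
    (forall y, Rabs y < delta -> q (g y) = y).

(* For x > 0 the local inverse g of q is the explicit root t = (sqrt(1+4x) - 1)/2 of
   t + t^2 = x, so x - p (g x) = - theta t and q x - p x = - theta x.  The ratio is then
   exp (1/x - 1/t), and 1/t - 1/(t + t^2) = 1/(1 + t): the flat terms cancel up to the
   factor exp (-1/(1+t)), which tends to exp (-1) as t -> 0. *)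
From Stdlib Require Import Reals Lra.
From Coquelicot Require Import Coquelicot.
Open Scope R_scope.

Lemma theta_of_pos (t : R) : 0 < t -> theta t = exp (- / t).
Proof.
  intros Ht. unfold theta. destruct (Req_EM_T t 0) as [E|E]; [lra|].
  now rewrite Rabs_pos_eq by lra.
Qed.

Lemma theta_q_ratio (t : R) : 0 < t -> theta t / theta (q t) = exp (- / (1 + t)).
Proof.
  intros Ht. unfold q.
  rewrite !theta_of_pos by nra.
  unfold Rdiv. rewrite <- exp_Ropp, <- exp_plus. f_equal.
  field. repeat split; nra.
Qed.

Definition q_root (x : R) : R := (sqrt (1 + 4 * x) - 1) / 2.

Lemma q_root_0 : q_root 0 = 0.
Proof. unfold q_root. rewrite Rmult_0_r, Rplus_0_r, sqrt_1. field. Qed.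

Lemma q_root_spec (x : R) : 0 < x -> 0 < q_root x < x /\ q (q_root x) = x.
Proof.
  intros Hx. unfold q, q_root.
  assert (Hsq : sqrt (1 + 4 * x) * sqrt (1 + 4 * x) = 1 + 4 * x)
    by (apply sqrt_sqrt; lra).
  pose proof (sqrt_pos (1 + 4 * x)).
  repeat split; nra.
Qed.

Lemma continuous_q_root_0 : continuous q_root 0.
Proof.
  apply (ex_derive_continuous (K := R_AbsRing) (V := R_NormedModule)).
  unfold q_root. auto_derive.
  rewrite Rmult_0_r, Rplus_0_r. lra.
Qed.

Lemma local_inverse_q_pos (g : R -> R) :
  local_inverse_at0 q g -> at_right 0 (fun x => g x = q_root x).
Proof.
  intros [delta [Hdelta [Hgq _]]].
  exists (mkposreal delta Hdelta). intros x Hx Hx0.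
  assert (Hxd : x < delta).
  { apply Rabs_lt_between' in Hx. simpl in Hx. lra. }
  destruct (q_root_spec x Hx0) as [Hroot Hq].
  rewrite <- Hq at 1. apply Hgq. rewrite Rabs_pos_eq; lra.
Qed.

Lemma ratio_eq_exp_q_root_near_0 (g : R -> R) :
  local_inverse_at0 q g ->
  at_right 0 (fun x => (x - p (g x)) / (q x - p x) = exp (- / (1 + q_root x))).
Proof.
  intros Hg.
  apply (filter_imp (fun x => g x = q_root x /\ 0 < x)).
  - intros x [Hgx Hx]. rewrite Hgx.
    destruct (q_root_spec x Hx) as [Hroot Hq].
    set (t := q_root x) in *. clearbody t. subst x.
    unfold p. rewrite <- theta_q_ratio by lra.
    assert (0 < theta (q t)) by (rewrite theta_of_pos by (unfold q; nra); apply exp_pos).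
    field. lra.
  - apply filter_and; [now apply local_inverse_q_pos|].
    exists (mkposreal 1 Rlt_0_1). now intros.
Qed.

Lemma lim_exp_q_root_at_right_0 :
  filterlim (fun x => exp (- / (1 + q_root x))) (at_right 0) (locally (exp (-1))).
Proof.
  assert (Hc : continuous (fun x => exp (- / (1 + q_root x))) 0).
  { apply (continuous_comp q_root (fun y => exp (- / (1 + y)))); [exact continuous_q_root_0|].
    apply (ex_derive_continuous (K := R_AbsRing) (V := R_NormedModule)).
    auto_derive. rewrite q_root_0. lra. }
  replace (exp (-1)) with (exp (- / (1 + q_root 0)))
    by (rewrite q_root_0, Rplus_0_r, Rinv_1; reflexivity).
  eapply filterlim_filter_le_1; [|exact Hc].
  intros P HP. now apply filter_le_within.
Qed.

Theorem mainTheorem2 (g : R -> R) :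
  local_inverse_at0 q g ->
  filterlim (fun x => (x - p (g x)) / (q x - p x)) (at_right 0) (locally (exp (-1)))
  /\ exp (-1) <> 1.
Proof.
  intros Hg. split.
  - eapply filterlim_ext_loc; [|exact lim_exp_q_root_at_right_0].
    eapply filter_imp; [|exact (ratio_eq_exp_q_root_near_0 g Hg)].
    now intros x ->.
  - intros E. rewrite <- exp_0 in E. apply exp_inv in E. lra.
Qed.
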